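(* A random permutation $\boldsymbol\pi\in\mathcal S_n$ is exchangeable if and only if its distribution is determined by a collection of functions of the form $$p(\pi)=p^{(n)}_k(n_1,\dots,n_k)=\frac{1}{\prod_{j=1}^k(n_j-1)!}\varphi^{(n)}_k(n_1,\dots,n_k)$$ for any $k\in[n]$, where $(\varphi^{(m)})_{m\geq1}$ is an EPPF and $(n_1,\dots,n_k)$ are the cycle lengths of $\pi$.
   Context: $\mathcal S_n$ is the symmetric group on $[n]=\{1,\dots,n\}$. The cycle type of $\pi\in\mathcal S_n$ is $\mathrm{t}(\pi)=(t_1(\pi),\dots,t_n(\pi))$, $t_i(\pi)$ being the number of cycles of length $i$. A random permutation $\boldsymbol\pi\in\mathcal S_n$ is finitely exchangeable if $P(\boldsymbol\pi=\pi)=P(\boldsymbol\pi=\pi')$ whenever $\mathrm{t}(\pi)=\mathrm{t}(\pi')$. The deletion map $\operatorname{del}:\mathcal S_{n+1}\to\mathcal S_n$ removes $n+1$ from the cycle representation: $\operatorname{del}(\sigma)(i)=\sigma(i)$ if $i\neq\sigma^{-1}(n+1)$, and $\operatorname{del}(\sigma)(i)=\sigma(n+1)$ if $i=\sigma^{-1}(n+1)$. A sequence $(\boldsymbol\pi_m)_{m\geq1}$, $\boldsymbol\pi_m\in\mathcal S_m$ with law $\mathcal L_m$, is consistent if $\operatorname{del}(\boldsymbol\pi_{m+1})\sim\mathcal L_m$ for all $m$. A random permutation $\boldsymbol\pi\in\mathcal S_n$ is exchangeable if there is a consistent sequence $(\boldsymbol\pi^\star_m)_{m\geq1}$ of finitely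 exchangeable random permutations with $\boldsymbol\pi^\star_n\overset{d}{=}\boldsymbol\pi$. An EPPF (exchangeable partition probability function) is a collection $(\varphi^{(n)})_{n\ge1}$ of symmetric functions $\varphi^{(n)}_k(n_1,\dots,n_k)$, $\sum_j n_j=n$, giving the probability of a given partition of $[n]$ into $k$ blocks of sizes $n_1,\dots,n_k$ under an exchangeable random partition, and satisfying $\varphi^{(1)}_1(1)=1$ and $\varphi_k^{(n)}(n_1,\dots,n_k)=\sum_{j=1}^k\varphi_k^{(n+1)}(n_1,\dots,n_j+1,\dots,n_k)+\varphi_{k+1}^{(n+1)}(n_1,\dots,n_k,1)$. *)

From HB Require Import structures.
From mathcomp Require Import all_boot all_order all_algebra all_fingroup.
From mathcomp Require Import reals.
Set Implicit Arguments. Unset Strict Implicit. Unset Printing Implicit Defensive.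
Import Order.TTheory GRing.Theory Num.Theory.
Local Open Scope ring_scope.

(* S_n is modelled as {perm 'I_n} (points 0..n-1 instead of 1..n). *)

Definition cycle_count (n : nat) (s : {perm 'I_n}) (i : nat) : nat :=
  #|[set C in porbits s | #|C| == i]|.

Definition cycle_lengths (n : nat) (s : {perm 'I_n}) : seq nat :=
  [seq #|(C : {set 'I_n})| | C in porbits s].

(* The deletion map del : S_{n+1} -> S_n (the point n+1 is ord_max),
   given as a function 'I_n -> 'I_n. *)
Definition del (n : nat) (s : {perm 'I_n.+1}) (i : 'I_n) : 'I_n :=
  match unlift ord_max (s (widen_ord (leqnSn n) i)) with
  | Some k => k
  | None => match unlift ord_max (s ord_max) with
            | Some k => k
            | None => i  (* unreachable, since s is injective *)
            end
  end.

Definition is_law (R : realType) (n : nat) (P : {ffun {perm 'I_n} -> R}) : Prop :=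
  (forall s, 0 <= P s) /\ \sum_(s : {perm 'I_n}) P s = 1.

Definition finitely_exchangeable (R : realType) (n : nat)
  (P : {ffun {perm 'I_n} -> R}) : Prop :=
  forall s t : {perm 'I_n},
    (forall i, cycle_count s i = cycle_count t i) -> P s = P t.

(* Law of del(pi_{m+1}) equals law of pi_m. *)
Definition consistent (R : realType) (Q : forall m : nat, {ffun {perm 'I_m} -> R}) : Prop :=
  forall (m : nat), (0 < m)%N -> forall pi : {perm 'I_m},
    Q m pi = \sum_(sg : {perm 'I_m.+1} | [forall i, del sg i == pi i]) Q m.+1 sg.

Definition exchangeable (R : realType) (n : nat) (P : {ffun {perm 'I_n} -> R}) : Prop :=
  exists Q : forall m : nat, {ffun {perm 'I_m} -> R},
    [/\ forall m, (0 < m)%N -> is_law (Q m),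
        forall m, (0 < m)%N -> finitely_exchangeable (Q m),
        consistent Q &
        Q n = P].

Definition is_comp (n : nat) (s : seq nat) : bool :=
  all (fun x => 0 < x)%N s && (sumn s == n).

(* EPPF: phi n [:: n_1; ...; n_k] = phi^{(n)}_k(n_1,...,n_k). *)
Definition EPPF (R : realType) (phi : nat -> seq nat -> R) : Prop :=
  [/\ forall n s t, is_comp n s -> perm_eq s t -> phi n s = phi n t,
      forall n s, (0 < n)%N -> is_comp n s -> 0 <= phi n s,
      phi 1%N [:: 1%N] = 1 &
      forall n s, (0 < n)%N -> is_comp n s ->
        phi n s = \sum_(j < size s) phi n.+1 (incr_nth s j)
                  + phi n.+1 (rcons s 1%N)].

From HB Require Import structures.
From mathcomp Require Import all_boot all_order all_algebra all_fingroup.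
From mathcomp Require Import reals zify.
Import Order.TTheory GRing.Theory Num.Theory.
Set Implicit Arguments. Unset Strict Implicit. Unset Printing Implicit Defensive.
Local Open Scope ring_scope.

(* Deleting the point [m.+1] from a permutation of [m.+1] points is undone by
   inserting it back, either as a new fixed point or right after one of the [m]
   old points, and the [n_j] insertions into a cycle of length [n_j] all turn it
   into a cycle of length [n_j + 1]. Summing [Q_(m+1) := phi_(m+1) / \prod_j (n_j - 1)!]
   over such a fibre, each factor [n_j] cancels against [n_j! / (n_j - 1)!], which
   leaves exactly the addition rule of an EPPF: [Q] is consistent iff [phi] is an
   EPPF. Conversely, the EPPF of a consistent exchangeable family is read off by
   multiplying back, every composition being the cycle type of some permutation. *)

Section PermutationOrbits.
Variable T : finType.
Implicit Types (s : {perm T}) (A : {set T}) (x y : T).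

Lemma porbit_closed s x y : y \in porbit s x -> s y \in porbit s x.
Proof. by rewrite -!eq_porbit_mem => /eqP <-; rewrite -[s y]/((s ^+ 1)%g y) porbit_perm. Qed.

Lemma porbit_min s A x : {in A, forall y, s y \in A} -> x \in A ->
  porbit s x \subset A.
Proof.
move=> sA xA; apply/subsetP => _ /porbitP[j ->]; rewrite permX.
by elim: j => //= j; apply: sA.
Qed.

Lemma porbit_morph (T' : finType) (s : {perm T}) (t : {perm T'}) (f : T' -> T) (a : T') :
  {morph f : b / t b >-> s b} -> porbit s (f a) = f @: porbit t a.
Proof.
move=> fM; have sjf j b : (s ^+ j)%g (f b) = f ((t ^+ j)%g b).
  by rewrite !permX; elim: j => //= j ->.
apply/setP => y; apply/porbitP/imsetP => [[j ->]|[_ /porbitP[j ->] ->]].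
  by exists ((t ^+ j)%g a); rewrite ?mem_porbit.
by exists j.
Qed.

Lemma sum_porbit (V : nmodType) s (g : {set T} -> V) :
  \sum_x g (porbit s x) = \sum_(C in porbits s) g C *+ #|C|.
Proof.
rewrite (partition_big (porbit s) (mem (porbits s))) => [|x _]; last exact: imset_f.
apply: eq_bigr => _ /imsetP[a _ ->].
rewrite (eq_bigr (fun=> g (porbit s a))) => [|x /eqP -> //]; rewrite sumr_const.
by congr (_ *+ _); apply: eq_card => x; rewrite -eq_porbit_mem.
Qed.

End PermutationOrbits.

Lemma perm_image_imset (T1 T2 : finType) (X : eqType) (f : T2 -> X) (h : T1 -> T2)
    (A : {set T1}) :
  injective h -> perm_eq [seq f y | y in h @: A] [seq f (h x) | x in A].
Proof.
move=> h_inj; rewrite /image_mem (map_comp f h); apply: perm_map.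
apply: uniq_perm; rewrite ?enum_uniq ?(map_inj_uniq h_inj) ?enum_uniq // => y.
by rewrite mem_enum; apply/imsetP/mapP => -[x xA ->]; exists x; rewrite ?mem_enum in xA *.
Qed.

Lemma perm_image_setD1 (T : finType) (X : eqType) (f : T -> X) (a : T) (A : {set T}) :
  a \in A -> perm_eq [seq f x | x in A] (f a :: [seq f x | x in A :\ a]).
Proof.
move=> aA; rewrite /image_mem -map_cons; apply: perm_map.
apply: uniq_perm; rewrite /= ?enum_uniq ?mem_enum ?setD11 // => x.
by rewrite in_cons !mem_enum in_setD1; case: eqP => // ->.
Qed.

Lemma perm_rem (T : eqType) (x : T) (s t : seq T) :
  perm_eq s t -> perm_eq (rem x s) (rem x t).
Proof.
move=> st; apply/seq.permP => p; rewrite !count_rem (perm_mem st).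
by move/seq.permP: st => ->.
Qed.

Definition grow_block (x : nat) (s : seq nat) := x.+1 :: rem x s.

Lemma incr_nth_perm (s : seq nat) j : (j < size s)%N ->
  perm_eq (incr_nth s j) (grow_block (nth 0%N s j) s).
Proof.
rewrite /grow_block; elim: s j => [|y s IH] [|j] //=; first by rewrite eqxx.
move=> js; have := IH j js; set z := nth 0%N s j; rewrite -(perm_cons y) => IHj.
apply: perm_trans IHj _.
rewrite -[_ :: _ :: rem z s]/([:: y] ++ [:: z.+1] ++ rem z s) perm_catCA /= perm_cons.
case: eqP => [->|//].
by rewrite perm_sym perm_to_rem ?mem_nth.
Qed.

Lemma is_comp_perm n s t : perm_eq s t -> is_comp n s = is_comp n t.
Proof. by move=> st; rewrite /is_comp (perm_all _ st) (perm_sumn st). Qed.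

Lemma is_comp0 s : is_comp 0 s -> s = [::].
Proof. by case: s => // x s; rewrite /is_comp /= => /andP[/andP[x_gt0 _] /eqP]; lia. Qed.

Lemma is_comp1 s : is_comp 1 s -> s = [:: 1%N].
Proof.
case: s => [|x [|y s]] //; rewrite /is_comp /=; first by rewrite addn0 => /andP[_ /eqP ->].
by case/andP=> /and3P[x_gt0 y_gt0 _] /eqP; lia.
Qed.

Lemma is_comp_cons1 n s : is_comp n s -> is_comp n.+1 (1%N :: s).
Proof. by rewrite /is_comp /= add1n eqSS. Qed.

Lemma is_comp_grow n s x : is_comp n s -> x \in s -> is_comp n.+1 (grow_block x s).
Proof.
move=> + xs; rewrite (is_comp_perm _ (perm_to_rem xs)) /is_comp /grow_block /=.
by case/andP=> /andP[_ ->]; rewrite addSn eqSS.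
Qed.

Section GrowSum.
Variable V : nmodType.
Implicit Types (F : seq nat -> V) (s t : seq nat).

Definition comp_symmetric n F := forall s t, is_comp n s -> perm_eq s t -> F s = F t.

(* The right-hand side of the addition rule of an EPPF, indexed by block sizes
   instead of block positions. *)
Definition grow_sum F s := \sum_(x <- s) F (grow_block x s) + F (1%N :: s).

Lemma grow_sum_perm n F s t : comp_symmetric n.+1 F -> is_comp n s -> perm_eq s t ->
  grow_sum F s = grow_sum F t.
Proof.
move=> Fsym cs st; rewrite /grow_sum (perm_big _ st) /=; congr (_ + _).
  apply: eq_big_seq => x xt; have xs : x \in s by rewrite (perm_mem st).
  by apply: Fsym; rewrite ?is_comp_grow // /grow_block perm_cons perm_rem.
by apply: Fsym; rewrite ?is_comp_cons1 // perm_cons.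
Qed.

Lemma sum_incr_nth n F s : comp_symmetric n.+1 F -> is_comp n s ->
  \sum_(j < size s) F (incr_nth s j) + F (rcons s 1%N) = grow_sum F s.
Proof.
move=> Fsym cs; rewrite /grow_sum (big_nth 0%N) big_mkord; congr (_ + _).
  apply: eq_bigr => j _; have xs : nth 0%N s j \in s by rewrite mem_nth.
  by apply/esym/Fsym; rewrite ?is_comp_grow // perm_sym incr_nth_perm.
by apply/esym/Fsym; rewrite ?is_comp_cons1 // perm_sym perm_rcons.
Qed.

End GrowSum.

Lemma sumn_cycle_lengths m (pi : {perm 'I_m}) : sumn (cycle_lengths pi) = m.
Proof.
rewrite sumnE /cycle_lengths big_image /=.
rewrite -[RHS]card_ord -sum1_card (sum_porbit pi (fun=> 1%N)).
by apply: eq_bigr => C _; rewrite natn.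
Qed.

Lemma cycle_lengths_comp m (pi : {perm 'I_m}) : is_comp m (cycle_lengths pi).
Proof.
rewrite /is_comp sumn_cycle_lengths eqxx andbT.
by apply/allP => _ /imageP[_ /imsetP[x _ ->] ->]; rewrite lt0n card_porbit_neq0.
Qed.

Lemma perm_cycle_lengths m (s t : {perm 'I_m}) :
  perm_eq (cycle_lengths s) (cycle_lengths t) <->
  (forall i, cycle_count s i = cycle_count t i).
Proof.
have countE (u : {perm 'I_m}) i : cycle_count u i = count_mem i (cycle_lengths u).
  rewrite /cycle_count /cycle_lengths /image_mem count_map -sum1_count.
  by rewrite big_enum_cond -sum1_card; apply: eq_bigl => C; rewrite !inE.
split=> [/seq.permP st i | st]; first by rewrite !countE st.
by apply/allP => i _ /=; rewrite -!countE st.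
Qed.

Section Insertion.
Variable m : nat.
Implicit Types (pi : {perm 'I_m}) (sg : {perm 'I_m.+1}) (k : 'I_m.+1) (x : 'I_m).

Definition add_fixpoint pi : {perm 'I_m.+1} := lift_perm ord_max ord_max pi.

(* For [k = lift ord_max i], the new point [ord_max] is inserted in the cycle of
   [pi] right after [i]; for [k = ord_max] it becomes a fixed point. *)
Definition insert_after pi k : {perm 'I_m.+1} := (tperm k ord_max * add_fixpoint pi)%g.

Lemma add_fixpoint_max pi : add_fixpoint pi ord_max = ord_max.
Proof. exact: lift_perm_id. Qed.

Lemma add_fixpoint_lift pi x : add_fixpoint pi (lift ord_max x) = lift ord_max (pi x).
Proof. exact: lift_perm_lift. Qed.

Lemma insert_after_self pi k : insert_after pi k k = ord_max.
Proof. by rewrite permM tpermL add_fixpoint_max. Qed.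

Lemma insert_after_max pi k : insert_after pi k ord_max = add_fixpoint pi k.
Proof. by rewrite permM tpermR. Qed.

Lemma insert_after_lift pi k x : lift ord_max x != k ->
  insert_after pi k (lift ord_max x) = lift ord_max (pi x).
Proof.
by move=> xk; rewrite permM tpermD ?add_fixpoint_lift // ?neq_lift // eq_sym.
Qed.

Lemma insert_after_fix pi : insert_after pi ord_max = add_fixpoint pi.
Proof. by rewrite /insert_after tperm1 mul1g. Qed.

Lemma insert_after_inj pi : injective (insert_after pi).
Proof.
move=> k k' kk'; apply: (@perm_inj _ (insert_after pi k')).
by rewrite -{1}kk' !insert_after_self.
Qed.

Lemma widen_lift x : widen_ord (leqnSn m) x = lift ord_max x.
Proof. by apply/val_inj; rewrite /= /bump leqNgt ltn_ord. Qed.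

Lemma del_lift sg x : lift ord_max (del sg x) =
  if sg (lift ord_max x) == ord_max then sg ord_max else sg (lift ord_max x).
Proof.
rewrite /del widen_lift.
case: (unliftP ord_max (sg (lift ord_max x))) => [j ->|sgx].
  by rewrite eq_sym (negbTE (neq_lift _ _)).
rewrite sgx eqxx; case: (unliftP ord_max (sg ord_max)) => [j -> //|sgmax].
by move: (neq_lift ord_max x); rewrite -(perm_inj (etrans sgmax (esym sgx))) eqxx.
Qed.

Lemma del_inj sg : injective (del sg).
Proof.
move=> a b /(congr1 (lift ord_max)); rewrite !del_lift.
case: eqP => [sga|_]; case: eqP => [sgb|_] /perm_inj.
- by move=> _; apply/(@lift_inj _ ord_max)/(@perm_inj _ sg); rewrite sga sgb.
- by move/eqP; rewrite (negbTE (neq_lift _ _)).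
- by move/esym/eqP; rewrite (negbTE (neq_lift _ _)).
- exact: lift_inj.
Qed.

Definition delp sg : {perm 'I_m} := perm (@del_inj sg).

Lemma del_fiberE sg pi : [forall i, del sg i == pi i] = (delp sg == pi).
Proof.
apply/forallP/eqP => [sgpi|<- i]; last by rewrite permE.
by apply/permP => i; rewrite permE; apply/eqP.
Qed.

Lemma delp_insert_after pi k : delp (insert_after pi k) = pi.
Proof.
apply/permP => x; apply: (@lift_inj _ ord_max); rewrite permE del_lift.
case: (eqVneq (lift ord_max x) k) => [<-|xk].
  by rewrite insert_after_self eqxx insert_after_max add_fixpoint_lift.
by rewrite insert_after_lift // eq_sym (negbTE (neq_lift _ _)).
Qed.

Lemma insert_after_delp sg : insert_after (delp sg) ((sg^-1)%g ord_max) = sg.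
Proof.
set k := (sg^-1)%g ord_max; have sgk : sg k = ord_max by rewrite permKV.
apply/permP => y; case: (unliftP ord_max y) => [x ->|->].
  case: (eqVneq (lift ord_max x) k) => [->|xk]; first by rewrite sgk insert_after_self.
  rewrite insert_after_lift // permE del_lift ifN //.
  by apply: contra xk => /eqP sgx; rewrite -(perm_inj (etrans sgx (esym sgk))).
rewrite insert_after_max; case: (unliftP ord_max k) => [x kx|kmax].
  by rewrite kx add_fixpoint_lift permE del_lift -kx sgk eqxx.
by rewrite kmax add_fixpoint_max -kmax sgk.
Qed.

Lemma sum_del_fiber (V : nmodType) pi (F : {perm 'I_m.+1} -> V) :
  \sum_(sg | [forall i, del sg i == pi i]) F sg = \sum_k F (insert_after pi k).
Proof.
rewrite -(big_imset _ (in2W (@insert_after_inj pi))) /=; apply: eq_bigl => sg.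
rewrite del_fiberE; apply/eqP/imsetP => [<-|[k _ ->]]; last exact: delp_insert_after.
by exists ((sg^-1)%g ord_max); rewrite ?insert_after_delp.
Qed.

End Insertion.

Lemma consistent_mass (R : realType) (Q : forall m : nat, {ffun {perm 'I_m} -> R}) m :
  consistent Q -> (0 < m)%N -> \sum_sg Q m.+1 sg = \sum_pi Q m pi.
Proof.
move=> Qcons m_gt0; rewrite (partition_big (@delp m) xpredT) //=.
by apply: eq_bigr => pi _; rewrite (Qcons m m_gt0 pi); apply: eq_bigl => sg; rewrite del_fiberE.
Qed.

Section InsertionCycles.
Variable m : nat.
Implicit Types (pi : {perm 'I_m}) (i x : 'I_m) (C : {set 'I_m}).

Lemma porbit_add_fixpoint_lift pi x :
  porbit (add_fixpoint pi) (lift ord_max x) = lift ord_max @: porbit pi x.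
Proof. by apply: porbit_morph => y; rewrite add_fixpoint_lift. Qed.

Lemma porbit_add_fixpoint_max pi : porbit (add_fixpoint pi) ord_max = [set ord_max].
Proof.
apply/setP => y; rewrite inE; apply/porbitP/eqP => [[j ->]|->].
  by rewrite permX_fix // add_fixpoint_max.
by exists 0%N; rewrite expg0 perm1.
Qed.

Lemma max_notin_lift C : ord_max \notin lift ord_max @: C.
Proof. by apply/imsetP => -[z _ /eqP]; rewrite (negbTE (neq_lift _ _)). Qed.

Lemma porbits_add_fixpoint pi : porbits (add_fixpoint pi) =
  [set ord_max] |: [set lift ord_max @: C | C : {set 'I_m} in porbits pi].
Proof.
apply/setP => D; rewrite in_setU1; apply/imsetP/orP => [[y _ ->]|[/eqP ->|]].
- case: (unliftP ord_max y) => [x ->|->]; last by left; rewrite porbit_add_fixpoint_max.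
  by right; rewrite porbit_add_fixpoint_lift; apply/imsetP; exists (porbit pi x); rewrite ?imset_f.
- by exists ord_max; rewrite ?porbit_add_fixpoint_max.
- case/imsetP => _ /imsetP[x _ ->] ->.
  by exists (lift ord_max x); rewrite ?porbit_add_fixpoint_lift.
Qed.

Lemma cycle_lengths_add_fixpoint pi :
  perm_eq (cycle_lengths (add_fixpoint pi)) (1%N :: cycle_lengths pi).
Proof.
rewrite /cycle_lengths porbits_add_fixpoint.
apply: perm_trans (perm_image_setD1 _ (setU11 _ _)) _; rewrite cards1 perm_cons setU1K.
  apply: perm_trans (perm_image_imset (fun D : {set 'I_m.+1} => #|D|) _
                                      (imset_inj (@lift_inj _ ord_max))) _.
  apply/seq.permP => p; rewrite !count_map; apply: eq_count => C /=.
  by rewrite card_imset //; apply: lift_inj.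
by apply/imsetP => -[C _ /setP/(_ ord_max)]; rewrite inE eqxx (negbTE (max_notin_lift C)).
Qed.

(* The cycle of [insert_after pi (lift ord_max i)] corresponding to the cycle [C] of [pi]. *)
Definition insert_cycle i C : {set 'I_m.+1} :=
  if i \in C then ord_max |: (lift ord_max @: C) else lift ord_max @: C.

Lemma mem_insert_cycle_lift i C x : (lift ord_max x \in insert_cycle i C) = (x \in C).
Proof.
rewrite /insert_cycle; case: ifP => _; rewrite ?in_setU1 mem_imset //; try exact: lift_inj.
by rewrite eq_sym (negbTE (neq_lift _ _)).
Qed.

Lemma mem_insert_cycle_max i C : (ord_max \in insert_cycle i C) = (i \in C).
Proof. by rewrite /insert_cycle; case: ifP; rewrite ?setU11 // (negbTE (max_notin_lift C)). Qed.

Lemma insert_cycle_inj i : injective (insert_cycle i).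
Proof. by move=> C D CD; apply/setP => x; rewrite -!(mem_insert_cycle_lift i) CD. Qed.

Lemma card_insert_cycle i C : #|insert_cycle i C| = (#|C| + (i \in C))%N.
Proof.
rewrite /insert_cycle; case: ifP => _; last by rewrite card_imset ?addn0 //; apply: lift_inj.
by rewrite cardsU1 max_notin_lift card_imset ?addn1 //; apply: lift_inj.
Qed.

Lemma porbit_insert_after_lift pi i x :
  porbit (insert_after pi (lift ord_max i)) (lift ord_max x) = insert_cycle i (porbit pi x).
Proof.
set sg := insert_after pi _; set O := porbit sg _.
have sg_i : sg (lift ord_max i) = ord_max by apply: insert_after_self.
have sg_max : sg ord_max = lift ord_max (pi i).
  by rewrite insert_after_max add_fixpoint_lift.
have sg_lift z : z != i -> sg (lift ord_max z) = lift ord_max (pi z).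
  by move=> zi; rewrite insert_after_lift // (inj_eq lift_inj).
apply/eqP; rewrite eqEsubset; apply/andP; split.
  apply: porbit_min; last by rewrite mem_insert_cycle_lift porbit_id.
  move=> y; case: (unliftP ord_max y) => [z ->|->]; last first.
    by rewrite mem_insert_cycle_max sg_max mem_insert_cycle_lift => /porbit_closed.
  rewrite mem_insert_cycle_lift; have [->|zi] := eqVneq z i.
    by rewrite sg_i mem_insert_cycle_max.
  by rewrite sg_lift // mem_insert_cycle_lift => /porbit_closed.
(* [sg] goes around [i -> ord_max -> pi i], so [O] meets the lift of each step of [pi]. *)
have liftO : porbit pi x \subset [set z | lift ord_max z \in O].
  apply: porbit_min => [z|]; rewrite !inE ?porbit_id //.
  have [->|zi] := eqVneq z i => zO; last by rewrite -sg_lift // porbit_closed.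
  by rewrite -sg_max; apply: porbit_closed; rewrite -{1}sg_i; apply: porbit_closed.
apply/subsetP => y; case: (unliftP ord_max y) => [z ->|->].
  by rewrite mem_insert_cycle_lift => /(subsetP liftO); rewrite inE.
by rewrite mem_insert_cycle_max -sg_i => /(subsetP liftO); rewrite inE => /porbit_closed.
Qed.

Lemma porbit_insert_after_max pi i :
  porbit (insert_after pi (lift ord_max i)) ord_max = insert_cycle i (porbit pi i).
Proof.
have : ord_max \in porbit (insert_after pi (lift ord_max i)) (lift ord_max i).
  by rewrite -{1}(insert_after_self pi (lift ord_max i)) porbit_closed ?porbit_id.
by rewrite -eq_porbit_mem => /eqP ->; apply: porbit_insert_after_lift.
Qed.

Lemma porbits_insert_after pi i :
  porbits (insert_after pi (lift ord_max i)) = insert_cycle i @: porbits pi.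
Proof.
apply/setP => D; apply/imsetP/imsetP => [[y _ ->]|[_ /imsetP[x _ ->] ->]].
  case: (unliftP ord_max y) => [x ->|->].
    by exists (porbit pi x); rewrite ?imset_f ?porbit_insert_after_lift.
  by exists (porbit pi i); rewrite ?imset_f ?porbit_insert_after_max.
by exists (lift ord_max x); rewrite ?porbit_insert_after_lift.
Qed.

Lemma cycle_lengths_insert_after pi i :
  perm_eq (cycle_lengths (insert_after pi (lift ord_max i)))
          (grow_block #|porbit pi i| (cycle_lengths pi)).
Proof.
have Ci : porbit pi i \in porbits pi by apply: imset_f.
have splitL := perm_image_setD1 (fun C : {set 'I_m} => #|C|) Ci.
rewrite /cycle_lengths /grow_block porbits_insert_after.
apply: perm_trans (perm_image_imset (fun D : {set 'I_m.+1} => #|D|) _ (@insert_cycle_inj i)) _.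
apply: perm_trans (perm_image_setD1 _ Ci) _.
rewrite /= card_insert_cycle porbit_id addn1 perm_cons.
have := perm_rem #|porbit pi i| splitL; rewrite /= eqxx perm_sym => remL.
apply: perm_trans _ remL.
apply/seq.permP => p; rewrite !count_map; apply: eq_in_count => C.
rewrite mem_enum => /setD1P[CCi /imsetP[a _ Ca]] /=.
rewrite card_insert_cycle; suff -> : (i \in C) = false by rewrite addn0.
by apply/negbTE; apply: contra CCi; rewrite Ca -eq_porbit_mem => /eqP ->.
Qed.

End InsertionCycles.

Lemma cycle_type_exists m s :
  is_comp m s -> exists pi : {perm 'I_m}, perm_eq (cycle_lengths pi) s.
Proof.
elim: m s => [|m IH] s cs.
  by exists 1%g; rewrite (is_comp0 cs) (is_comp0 (cycle_lengths_comp _)).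
case: s cs => [//|[//|[|x]] t] cs.
  have [pi pi_t] := IH t cs.
  by exists (add_fixpoint pi); rewrite (perm_trans (cycle_lengths_add_fixpoint pi)) ?perm_cons.
have [pi pi_t] : exists pi : {perm 'I_m}, perm_eq (cycle_lengths pi) (x.+1 :: t).
  by apply: IH; move: cs; rewrite /is_comp /= addSn eqSS.
have /imageP[_ /imsetP[i _ ->] ci] : x.+1 \in cycle_lengths pi.
  by rewrite (perm_mem pi_t) mem_head.
exists (insert_after pi (lift ord_max i)).
rewrite (perm_trans (cycle_lengths_insert_after pi i)) // /grow_block -ci perm_cons.
by have := perm_rem x.+1 pi_t; rewrite /= eqxx.
Qed.

Section CyclicOrders.
Variable R : numFieldType.
Implicit Types (s t : seq nat).

(* The number of ways to arrange blocks of sizes [s] into cycles: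
   \prod_j (n_j - 1)! in the paper. *)
Definition cyclic_orders s : R := \prod_(x <- s) (x.-1)`!%:R.

Lemma cyclic_orders_gt0 s : 0 < cyclic_orders s.
Proof. by apply: prodr_gt0 => x _; rewrite ltr0n fact_gt0. Qed.

Lemma cyclic_orders_neq0 s : cyclic_orders s != 0.
Proof. by rewrite gt_eqF ?cyclic_orders_gt0. Qed.

Lemma cyclic_orders_perm s t : perm_eq s t -> cyclic_orders s = cyclic_orders t.
Proof. exact: perm_big. Qed.

Lemma cyclic_orders_nil : cyclic_orders [::] = 1.
Proof. exact: big_nil. Qed.

Lemma cyclic_orders_cons1 s : cyclic_orders (1%N :: s) = cyclic_orders s.
Proof. by rewrite /cyclic_orders big_cons mul1r. Qed.

Lemma cyclic_orders_grow s x : (0 < x)%N -> x \in s ->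
  cyclic_orders (grow_block x s) = cyclic_orders s * x%:R.
Proof.
move=> x_gt0 xs; rewrite (cyclic_orders_perm (perm_to_rem xs)) /cyclic_orders !big_cons.
have -> : x.+1.-1`! = (x * x.-1`!)%N by rewrite -{1}(prednK x_gt0) factS prednK.
by rewrite natrM -mulrA mulrC.
Qed.

Lemma prod_porbits_fact m (pi : {perm 'I_m}) :
  \prod_(C in porbits pi) (#|C|.-1)`!%:R = cyclic_orders (cycle_lengths pi).
Proof. by rewrite /cyclic_orders big_image. Qed.

Lemma sum_insert_after m (pi : {perm 'I_m}) (F : seq nat -> R) :
  comp_symmetric m.+1 F ->
  \sum_(k < m.+1) F (cycle_lengths (insert_after pi k)) /
                  cyclic_orders (cycle_lengths (insert_after pi k)) =
  grow_sum F (cycle_lengths pi) / cyclic_orders (cycle_lengths pi).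
Proof.
move=> Fsym; have W_perm (sg : {perm 'I_m.+1}) u : perm_eq (cycle_lengths sg) u ->
    F (cycle_lengths sg) / cyclic_orders (cycle_lengths sg) = F u / cyclic_orders u.
  by move=> su; rewrite (Fsym _ _ (cycle_lengths_comp sg) su) (cyclic_orders_perm su).
rewrite /grow_sum mulrDl big_ord_recr /= insert_after_fix.
rewrite (W_perm _ _ (cycle_lengths_add_fixpoint pi)) cyclic_orders_cons1; congr (_ + _).
under eq_bigr do rewrite widen_lift (W_perm _ _ (cycle_lengths_insert_after _ _)).
set L := cycle_lengths pi; pose G c := F (grow_block c L) / cyclic_orders (grow_block c L).
rewrite (sum_porbit pi (fun C => G #|C|)) {2}/L /cycle_lengths big_image mulr_suml.
apply: eq_bigr => C /imsetP[x _ ->]; rewrite /G -mulr_natr.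
have c_gt0 : (0 < #|porbit pi x|)%N by rewrite lt0n card_porbit_neq0.
rewrite cyclic_orders_grow ?map_f ?mem_enum ?imset_f // invfM mulrA.
by rewrite mulfVK // pnatr_eq0 -lt0n.
Qed.

End CyclicOrders.

Section LawsAndEPPFs.
Variable R : realType.
Implicit Types (phi : nat -> seq nat -> R) (Q : forall m : nat, {ffun {perm 'I_m} -> R}).

Definition eppf_law phi m : {ffun {perm 'I_m} -> R} :=
  [ffun pi => phi m (cycle_lengths pi) / cyclic_orders R (cycle_lengths pi)].

Lemma eppf_law_consistent phi : EPPF phi -> consistent (eppf_law phi).
Proof.
case=> sym _ _ rec m m_gt0 pi; rewrite sum_del_fiber ffunE.
under eq_bigr do rewrite ffunE.
rewrite sum_insert_after; last exact: sym.
rewrite rec ?cycle_lengths_comp // (sum_incr_nth (n := m)) ?cycle_lengths_comp //.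
exact: sym.
Qed.

Lemma eppf_law_is_law phi m : EPPF phi -> (0 < m)%N -> is_law (eppf_law phi m).
Proof.
move=> phiE m_gt0; have [_ phi_ge0 phi1 _] := phiE; split=> [pi|].
  by rewrite ffunE divr_ge0 ?phi_ge0 ?cycle_lengths_comp // ltW ?cyclic_orders_gt0.
elim: m m_gt0 => [//|[_ _|m IH _]].
  rewrite (big_pred1 1%g) => [|pi]; last by rewrite /= [pi]permS1 eqxx.
  rewrite ffunE (is_comp1 (cycle_lengths_comp _)) cyclic_orders_cons1 cyclic_orders_nil.
  by rewrite phi1 divr1.
by rewrite (consistent_mass (eppf_law_consistent phiE)) ?IH.
Qed.

Lemma eppf_law_exchangeable phi m : EPPF phi -> finitely_exchangeable (eppf_law phi m).
Proof.
case=> sym _ _ _ s t /perm_cycle_lengths st.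
by rewrite !ffunE (sym _ _ _ (cycle_lengths_comp s) st) (cyclic_orders_perm _ st).
Qed.

(* Junk value [0] on sequences that are not the cycle type of a permutation of ['I_m]. *)
Definition law_eppf Q m (s : seq nat) : R :=
  if [pick pi : {perm 'I_m} | perm_eq (cycle_lengths pi) s] is Some pi
  then Q m pi * cyclic_orders R s else 0.

Lemma law_eppfE Q m (pi : {perm 'I_m}) s : finitely_exchangeable (Q m) ->
  perm_eq (cycle_lengths pi) s -> law_eppf Q m s = Q m pi * cyclic_orders R s.
Proof.
move=> Qexch pi_s; rewrite /law_eppf; case: pickP => [pi' pi'_s|/(_ pi)]; last by rewrite pi_s.
by congr (_ * _); apply/Qexch/perm_cycle_lengths; rewrite (permPr pi_s).
Qed.

Lemma law_eppf_perm Q m s t : perm_eq s t -> law_eppf Q m s = law_eppf Q m t.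
Proof.
move=> st; rewrite /law_eppf (eq_pick (fun pi => permPr st (cycle_lengths pi))).
by case: pickP => // pi _; rewrite (cyclic_orders_perm _ st).
Qed.

Lemma law_eppf_grow Q n s : (forall m, (0 < m)%N -> finitely_exchangeable (Q m)) ->
  consistent Q -> (0 < n)%N -> is_comp n s ->
  law_eppf Q n s = grow_sum (law_eppf Q n.+1) s.
Proof.
move=> Qexch Qcons n_gt0 cs; have [pi pi_s] := cycle_type_exists cs.
rewrite (law_eppfE (Qexch n n_gt0) pi_s) -(cyclic_orders_perm _ pi_s) (Qcons n n_gt0 pi).
have QE (sg : {perm 'I_n.+1}) : Q n.+1 sg =
    law_eppf Q n.+1 (cycle_lengths sg) / cyclic_orders R (cycle_lengths sg).
  by rewrite (law_eppfE (Qexch n.+1 isT) (perm_refl _)) mulfK ?cyclic_orders_neq0.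
have Qsym : comp_symmetric n.+1 (law_eppf Q n.+1) by move=> u v _; apply: law_eppf_perm.
rewrite sum_del_fiber (eq_bigr _ (fun sg _ => QE _)) sum_insert_after //.
rewrite divfK ?cyclic_orders_neq0 //.
exact: grow_sum_perm Qsym (cycle_lengths_comp pi) pi_s.
Qed.

Lemma law_eppf_EPPF Q : (forall m, (0 < m)%N -> is_law (Q m)) ->
  (forall m, (0 < m)%N -> finitely_exchangeable (Q m)) -> consistent Q ->
  EPPF (law_eppf Q).
Proof.
move=> Qlaw Qexch Qcons; split=> [n s t _|n s n_gt0 cs||n s n_gt0 cs].
- exact: law_eppf_perm.
- rewrite /law_eppf; case: pickP => // pi _.
  by rewrite mulr_ge0 ?(Qlaw n n_gt0).1 // ltW ?cyclic_orders_gt0.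
- rewrite (law_eppfE (pi := 1%g) (Qexch 1%N isT)) ?(is_comp1 (cycle_lengths_comp _)) //.
  rewrite cyclic_orders_cons1 cyclic_orders_nil mulr1 -(Qlaw 1%N isT).2.
  by rewrite (big_pred1 1%g) // => pi; rewrite /= [pi]permS1 eqxx.
rewrite (law_eppf_grow Qexch) // (sum_incr_nth _ cs) // => u v _.
by apply: law_eppf_perm.
Qed.

End LawsAndEPPFs.

Unset Implicit Arguments.

Theorem theorem1 (R : realType) (n : nat) (P : {ffun {perm 'I_n} -> R}) :
  (0 < n)%N -> is_law P ->
  (exchangeable P <->
   exists phi : nat -> seq nat -> R,
     EPPF phi /\
     forall pi : {perm 'I_n},
       P pi = phi n (cycle_lengths pi) /
              \prod_(C in porbits pi) ((#|C|.-1)`!)%:R).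
Proof.
move=> n_gt0 _; split=> [[Q [Qlaw Qexch Qcons <-]]|[phi [phiE Pphi]]].
  exists (law_eppf Q); split; first exact: law_eppf_EPPF.
  move=> pi; rewrite prod_porbits_fact (law_eppfE (Qexch n n_gt0) (perm_refl _)).
  by rewrite mulfK ?cyclic_orders_neq0.
exists (eppf_law phi); split.
- by move=> m; apply: eppf_law_is_law.
- by move=> m _; apply: eppf_law_exchangeable.
- exact: eppf_law_consistent.
- by apply/ffunP => pi; rewrite ffunE Pphi prod_porbits_fact.
Qed.
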